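(* Let lines $L_1,L_2$ of $Y_m$ intersect at a point $z$ with acute angle $\delta$, and let $x,y\in L_1$ lie on the same side of $z$. Let $r_1,r_2$ be rules with distinct orientation values, the orientations chosen so that the rules map farthest from $z$, and suppose the points $r_i(x),r_i(y)\in L_2$ and $r_i(r_j(x)),r_i(r_j(y))\in L_1$ ($i,j\in\{1,2\}$, $i\neq j$) all lie on the same side of $z$. Let $\theta_1,\theta_2\in(0,\pi/2]$ be the projection angles of $r_1,r_2$ and $c_1,c_2$ their separation coefficients. Then $0\le c_1c_2<1$ if and only if $$\frac{\pi-\delta}{2}<\frac{\theta_1+\theta_2}{2}\le\frac{\pi}{2}.$$
   Context: $Y_m\subset\mathbb{R}^2$ is a union of $m\ge3$ pairwise nonparallel, not all concurrent lines. A rule with projection angle $\theta\in(0,\pi/2]$ maps a point $x$ on one line to an intersection point with the target line of a line through $x$ meeting the target line at angle $\theta$; the orientation value selects which of the two such lines is used. For a rule with projection angle $\theta$ mapping points on one side of $z$ on one of $L_1,L_2$ to points on the same side of $z$ on the other line, with orientation chosen to map farthest from $z$, one has $d(r(x),r(y))=c\,d(x,y)$ with separation coefficient $c=\sin(\gamma)/\sin(\theta)$, $\gamma=\pi-\delta-\theta$ (by the law of sines). Thus $c_i=\sin(\pi-\delta-\theta_i)/\sin(\theta_i)$. *)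

From Stdlib Require Import Reals.
Open Scope R_scope.

(* Third angle of the triangle z, x, r(x): the angle at z is delta (the acute
   angle between L1 and L2), the angle at r(x) is the projection angle theta. *)
Definition third_angle (delta theta : R) : R := PI - delta - theta.

(* Separation coefficient of a rule with projection angle theta between two
   lines meeting at angle delta (orientation chosen to map farthest from z):
   c = sin(gamma)/sin(theta), gamma = pi - delta - theta  (law of sines). *)
Definition sep_coeff (delta theta : R) : R :=
  sin (third_angle delta theta) / sin theta.

(* With [c(θ) = sin(δ+θ)/sin θ], the identity
   [sin(δ+θ1) sin(δ+θ2) - sin θ1 sin θ2 = sin δ sin(δ+θ1+θ2)] gives
   [c1 c2 - 1 = sin δ sin(δ+θ1+θ2) / (sin θ1 sin θ2)].  Both coefficients are
   positive, so [c1 c2 < 1] exactly when [sin(δ+θ1+θ2) < 0], i.e. when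
   [δ + θ1 + θ2 > π]; the bound [θ1 + θ2 <= π] holds automatically. *)

From Stdlib Require Import Reals Lra.
Open Scope R_scope.

Lemma sin_add_mul_sub_sin_mul (d a b : R) :
  sin (d + a) * sin (d + b) - sin a * sin b = sin d * sin (d + a + b).
Proof.
  replace (d + a + b) with (d + (a + b)) by ring.
  rewrite !sin_plus, cos_plus.
  pose proof (sin2_cos2 d) as Hpyth; unfold Rsqr in Hpyth.
  transitivity
    (sin d * (sin d * (cos a * cos b - sin a * sin b)
              + cos d * (sin a * cos b + cos a * sin b))
     + (sin d * sin d + cos d * cos d - 1) * sin a * sin b).
  - ring.
  - rewrite Hpyth; ring.
Qed.

Lemma sin_lt_0_iff (x : R) : 0 < x < 2 * PI -> sin x < 0 <-> PI < x.
Proof.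
  intros Hx; split.
  - intros Hsin.
    destruct (Rle_or_lt x PI) as [Hle | Hlt]; [| exact Hlt].
    assert (0 <= sin x) by (apply sin_ge_0; lra).
    lra.
  - intros Hlt; apply sin_lt_0; lra.
Qed.

Lemma sep_coeff_sin (delta theta : R) :
  sep_coeff delta theta = sin (delta + theta) / sin theta.
Proof.
  unfold sep_coeff, third_angle.
  replace (PI - delta - theta) with (PI - (delta + theta)) by ring.
  now rewrite sin_PI_x.
Qed.

Lemma sep_coeff_gt_0 (delta theta : R) :
  0 < delta -> 0 < theta -> delta + theta < PI -> 0 < sep_coeff delta theta.
Proof.
  intros Hd Ht Hsum.
  rewrite sep_coeff_sin.
  apply Rdiv_lt_0_compat; apply sin_gt_0; lra.
Qed.

Lemma sep_coeff_mul_sub_1 (delta theta1 theta2 : R) :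
  sin theta1 <> 0 -> sin theta2 <> 0 ->
  sep_coeff delta theta1 * sep_coeff delta theta2 - 1
  = sin delta * sin (delta + theta1 + theta2) / (sin theta1 * sin theta2).
Proof.
  intros H1 H2.
  rewrite !sep_coeff_sin, <- sin_add_mul_sub_sin_mul.
  field; auto.
Qed.

Lemma sep_coeff_mul_lt_1_iff (delta theta1 theta2 : R) :
  0 < delta < PI -> 0 < theta1 < PI -> 0 < theta2 < PI ->
  sep_coeff delta theta1 * sep_coeff delta theta2 < 1 <->
  sin (delta + theta1 + theta2) < 0.
Proof.
  intros Hd H1 H2.
  assert (Hsd : 0 < sin delta) by (apply sin_gt_0; lra).
  assert (Hs1 : 0 < sin theta1) by (apply sin_gt_0; lra).
  assert (Hs2 : 0 < sin theta2) by (apply sin_gt_0; lra).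
  pose proof (sep_coeff_mul_sub_1 delta theta1 theta2 ltac:(lra) ltac:(lra))
    as Hdiff.
  assert (Hpos : 0 < sin delta / (sin theta1 * sin theta2))
    by (apply Rdiv_lt_0_compat; nra).
  replace (sin delta * sin (delta + theta1 + theta2) / (sin theta1 * sin theta2))
    with (sin (delta + theta1 + theta2) * (sin delta / (sin theta1 * sin theta2)))
    in Hdiff by (field; lra).
  split; intros; nra.
Qed.

Theorem lemma1 (delta theta1 theta2 : R)
  (Hdelta : 0 < delta < PI / 2)
  (Htheta1 : 0 < theta1 <= PI / 2)
  (Htheta2 : 0 < theta2 <= PI / 2) :
  (0 <= sep_coeff delta theta1 * sep_coeff delta theta2 < 1) <->
  ((PI - delta) / 2 < (theta1 + theta2) / 2 <= PI / 2).
Proof.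
  pose proof PI_RGT_0.
  assert (Hc1 : 0 < sep_coeff delta theta1) by (apply sep_coeff_gt_0; lra).
  assert (Hc2 : 0 < sep_coeff delta theta2) by (apply sep_coeff_gt_0; lra).
  rewrite (sep_coeff_mul_lt_1_iff delta theta1 theta2), sin_lt_0_iff by lra.
  split; intros; split; nra.
Qed.
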